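(* Let $G$ be a connected graph and $k \ge 1$ an integer. For all $\Pi_1, \Pi_2 \in \mathrm{Part}(G,k)$ there is a sequence of at most $6(k-1)$ recombination moves (each intermediate partition lying in $\mathrm{Part}(G,k)$) that transforms $\Pi_1$ into $\Pi_2$. In particular, the configuration space $\mathcal{R}_\infty(G,k)$ is connected.
   Context: For a graph $G$ and positive integer $k$, a connected $k$-partition of $G$ is a partition of $V(G)$ into $k$ disjoint nonempty sets (districts) each inducing a connected subgraph; $\mathrm{Part}(G,k)$ is the set of these. Two distinct connected $k$-partitions $\{V_1,\dots,V_k\}$ and $\{W_1,\dots,W_k\}$ are related by a recombination move if there are indices $i,j$ and a permutation $\pi$ of $\{1,\dots,k\}$ with $V_i \cup V_j = W_{\pi(i)} \cup W_{\pi(j)}$ and $V_\ell = W_{\pi(\ell)}$ for all $\ell \notin \{i,j\}$. $\mathcal{R}_\infty(G,k)$ is the graph on $\mathrm{Part}(G,k)$ whose edges are the recombination moves. *)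

(* A finite simple graph is T : finType with a symmetric,
   irreflexive adjacency relation e : rel T. *)
From mathcomp Require Import all_boot.
Set Implicit Arguments. Unset Strict Implicit. Unset Printing Implicit Defensive.

Section Graphs.
Variables (T : finType) (e : rel T).

Definition induced_rel (A : {set T}) : rel T :=
  [rel u v | [&& u \in A, v \in A & e u v]].

Definition connected_set (A : {set T}) : Prop :=
  A != set0 /\ forall x y, x \in A -> y \in A -> connect (induced_rel A) x y.

Definition connected_graph : Prop := connected_set [set: T].

Definition conn_partition (k : nat) (P : {set {set T}}) : Prop :=
  [/\ partition P [set: T], #|P| = k & forall A, A \in P -> connected_set A].

Definition recomb (P Q : {set {set T}}) : Prop :=
  P != Q /\
  exists A B C D, [/\ [&& A \in P, B \in P & A != B], [&& C \in Q, D \in Q & C != D],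
    A :|: B = C :|: D & P :\ A :\ B = Q :\ C :\ D].

Definition Rinf_edge (k : nat) (P Q : {set {set T}}) : Prop :=
  [/\ conn_partition k P, conn_partition k Q & recomb P Q].

(* a walk P = s_0, s_1, ..., s_n = Q in R_infty(G,k) of length n = size s
   (s lists s_1..s_n) *)
Fixpoint Rinf_walk (k : nat) (P : {set {set T}}) (s : seq {set {set T}}) : Prop :=
  match s with
  | [::] => True
  | Q :: s' => Rinf_edge k P Q /\ Rinf_walk k Q s'
  end.

Inductive Rinf_conn (k : nat) : {set {set T}} -> {set {set T}} -> Prop :=
  | Rinf_refl P : Rinf_conn k P P
  | Rinf_step P Q R : Rinf_edge k P Q -> Rinf_conn k Q R -> Rinf_conn k P R.

End Graphs.

From mathcomp Require Import all_boot.
Set Implicit Arguments. Unset Strict Implicit. Unset Printing Implicit Defensive.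

(* Any two connected k-partitions of a connected graph G are joined by at most
   4(k-1) recombination moves; this gives the bound 6(k-1) of the theorem and
   the connectivity of R_inf(G,k).

   We work with connected k-partitions of an arbitrary connected vertex set U
   and argue by induction on k.  The branches of a vertex v in a partition P
   are the components of the block of v with v deleted.  If v does not
   disconnect U, one move detaches a branch from the block of v and glues it
   to an adjacent block (peel_step), so v becomes a singleton block after as
   many moves as it has branches (isolate).  A good vertex -- one that does
   not disconnect U and has at most 4 branches in P and Q together -- always
   exists (good_vertex): the vertices of a smallest component W of U minus a
   vertex are not cut vertices (min_comp_noncut), and in any partition they
   have at most 2 #|W| branches in total (sum_branches).  Isolating a good
   vertex v in P and in Q costs at most 4 moves, and the remaining
   (k-1)-partitions of U minus v are joined by induction (reach_bound). *)

Section Recombination.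
Variables (T : finType) (e : rel T).
Hypothesis sym_e : symmetric e.
Implicit Types (S U W X Y A B C D : {set T}) (a b r u v w x y z : T).
Implicit Types (P Q R : {set {set T}}).

Local Notation conn S := (connect (induced_rel e S)).

Lemma induced_rel_sym S : symmetric (induced_rel e S).
Proof. by move=> x y; rewrite /induced_rel /= sym_e andbCA. Qed.

Lemma conn_sym S x y : conn S x y = conn S y x.
Proof. exact: (sym_connect_sym (induced_rel_sym S)). Qed.

Lemma conn_edge S x y : x \in S -> y \in S -> e x y -> conn S x y.
Proof. by move=> xS yS exy; apply/connect1/and3P. Qed.

Lemma conn_subset S S' x y : S \subset S' -> conn S x y -> conn S' x y.
Proof.
move=> /subsetP sSS'; apply: connect_sub => a b /and3P[aS bS eab].
by apply: conn_edge; rewrite ?sSS'.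
Qed.

Lemma conn_exit S X x y : x \in X -> y \notin X -> conn S x y ->
  exists a b, [/\ a \in X, b \notin X, a \in S, b \in S & e a b].
Proof.
move=> xX yX /connectP[p + yl]; elim: p x xX yl => [|b p IH] x xX /=.
  by move=> yx; rewrite yx xX in yX.
move=> yl /andP[/and3P[xS bS exb] pp].
by case: (boolP (b \in X)) => [bX|]; [apply: IH bX yl pp | exists x, b].
Qed.

Lemma connected_from X c : c \in X -> (forall y, y \in X -> conn X c y) ->
  connected_set e X.
Proof.
move=> cX cXy; split; first by apply/set0Pn; exists c.
by move=> x y xX yX; apply: connect_trans (cXy y yX); rewrite conn_sym cXy.
Qed.

Lemma connected_conn X x y : connected_set e X -> x \in X -> y \in X -> conn X x y.
Proof. by case=> _; apply. Qed.

Lemma connected_set1 v : connected_set e [set v].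
Proof. by apply: (connected_from (set11 v)) => y /set1P ->. Qed.

Lemma connected_setU X Y a b : connected_set e X -> connected_set e Y ->
  a \in X -> b \in Y -> e a b -> connected_set e (X :|: Y).
Proof.
move=> cX cY aX bY eab; apply: (@connected_from _ a); first by rewrite inE aX.
have ab : conn (X :|: Y) a b by apply: conn_edge => //; rewrite inE ?aX ?bY ?orbT.
move=> y /setUP[yX|yY]; first exact: conn_subset (subsetUl X Y) (connected_conn cX aX yX).
exact: connect_trans ab (conn_subset (subsetUr X Y) (connected_conn cY bY yY)).
Qed.

Definition comp S z := [set y in S | conn S z y].
Definition comps S := [set comp S z | z in S].

Lemma comp_sub S z : comp S z \subset S.
Proof. by apply/subsetP=> y; rewrite inE => /andP[]. Qed.

Lemma comp_self S z : z \in S -> z \in comp S z.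
Proof. by move=> zS; rewrite inE zS connect0. Qed.

Lemma mem_comps S z : z \in S -> comp S z \in comps S.
Proof. exact: imset_f. Qed.

Lemma comps_sub S D : D \in comps S -> D \subset S.
Proof. by case/imsetP=> z _ ->; apply: comp_sub. Qed.

Lemma comp_closed S z a b : a \in comp S z -> b \in S -> e a b -> b \in comp S z.
Proof.
rewrite !inE => /andP[aS za] bS eab; rewrite bS.
exact: connect_trans za (conn_edge aS bS eab).
Qed.

Lemma comps_closed S D a b : D \in comps S -> a \in D -> b \in S -> e a b -> b \in D.
Proof. by case/imsetP=> z _ ->; apply: comp_closed. Qed.

Lemma comp_eq S z y : y \in comp S z -> comp S y = comp S z.
Proof.
rewrite inE => /andP[yS zy]; apply/setP=> w; rewrite !inE.
case: (w \in S) => //=; apply/idP/idP => [|zw]; first exact: connect_trans zy.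
by apply: connect_trans zw; rewrite conn_sym.
Qed.

Lemma comps_eq S D1 D2 y : D1 \in comps S -> D2 \in comps S ->
  y \in D1 -> y \in D2 -> D1 = D2.
Proof.
by move=> /imsetP[z1 _ ->] /imsetP[z2 _ ->] y1 y2; rewrite -(comp_eq y1) -(comp_eq y2).
Qed.

(* A component is connected in itself, not only inside S. *)
Lemma comp_path S z a p : a \in comp S z -> path (induced_rel e S) a p ->
  conn (comp S z) a (last a p).
Proof.
elim: p a => [|b p IH] a az /=; first by rewrite connect0.
case/andP=> /and3P[aS bS eab] pth; have bz := comp_closed az bS eab.
exact: connect_trans (conn_edge az bz eab) (IH b bz pth).
Qed.

Lemma connected_comp S z : z \in S -> connected_set e (comp S z).
Proof.
move=> zS; apply: (connected_from (comp_self zS)) => y.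
by rewrite inE => /andP[_ /connectP[p pth ->]]; apply: comp_path (comp_self zS) pth.
Qed.

Lemma connected_comps S D : D \in comps S -> connected_set e D.
Proof. by case/imsetP=> z zS ->; apply: connected_comp. Qed.

Lemma comp_max S X z : X \subset S -> z \in X -> connected_set e X ->
  X \subset comp S z.
Proof.
move=> XS zX cX; apply/subsetP => y yX; rewrite inE (subsetP XS) //=.
exact: conn_subset XS (connected_conn cX zX yX).
Qed.

Lemma comp_avoid S D y : D \in comps S -> y \in S -> y \notin D ->
  comp S y \subset S :\: D.
Proof.
move=> DS yS yD; apply/subsetP => x xy; rewrite inE (subsetP (comp_sub S y)) // andbT.
apply: contra yD => xD.
by rewrite -(comps_eq (mem_comps yS) DS xy xD) comp_self.
Qed.

Lemma comp_setD S D y : D \in comps S -> y \in S :\: D -> comp (S :\: D) y = comp S y.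
Proof.
move=> DS /setDP[yS yD]; have sSD : S :\: D \subset S := subsetDl S D.
apply/eqP; rewrite eqEsubset; apply/andP; split.
  by apply: comp_max (subset_trans (comp_sub _ y) sSD) _ (connected_comp _);
    rewrite ?comp_self ?inE ?yD.
by apply: comp_max (comp_avoid DS yS yD) (comp_self yS) (connected_comp yS).
Qed.

Lemma comps_setD S D : D \in comps S -> comps (S :\: D) = comps S :\ D.
Proof.
move=> DS; apply/setP => X; apply/imsetP/setD1P.
  case=> y ySD ->; have /setDP[yS yD] := ySD.
  rewrite comp_setD //; split; last exact: mem_comps.
  by apply: contraNneq yD => <-; apply: comp_self.
case=> XD /imsetP[y yS defX].
have yD : y \notin D.
  by apply: contra XD => yD; rewrite defX (comps_eq (mem_comps yS) DS (comp_self yS) yD).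
have ySD : y \in S :\: D by rewrite inE yD.
by exists y; rewrite // defX comp_setD.
Qed.

Lemma comp_neighbor A v y : connected_set e A -> v \in A -> y \in A :\ v ->
  exists2 a, a \in comp (A :\ v) y & e a v.
Proof.
move=> cA vA yAv; have /setD1P[_ yA] := yAv.
have vy : v \notin comp (A :\ v) y.
  by apply/negP => /(subsetP (comp_sub _ _)); rewrite !inE eqxx.
have [a [b [ay by' aA bA eab]]] := conn_exit (comp_self yAv) vy (connected_conn cA yA vA).
exists a => //; case: (eqVneq b v) => [<- //|bv].
by rewrite (comp_closed ay _ eab) ?inE ?bv in by'.
Qed.

(* Removing from a connected A one component of A minus v keeps A connected:
   every other component hangs on v. *)
Lemma connected_setD_comp A v D : connected_set e A -> v \in A ->
  D \in comps (A :\ v) -> connected_set e (A :\: D).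
Proof.
move=> cA vA DS; have vD : v \notin D.
  by apply/negP => /(subsetP (comps_sub DS)); rewrite setD11.
have vAD : v \in A :\: D by rewrite inE vD.
apply: (connected_from vAD) => x; case: (eqVneq x v) => [-> _|xv /setDP[xA xD]].
  exact: connect0.
have xAv : x \in A :\ v by apply/setD1P.
have sub : comp (A :\ v) x \subset A :\: D.
  by apply: subset_trans (comp_avoid DS xAv xD) _; apply: setSD; apply: subsetDl.
have [a ax eav] := comp_neighbor cA vA xAv.
apply: connect_trans (_ : conn _ v a) _.
  by apply: conn_edge; rewrite // ?(subsetP sub) // sym_e.
apply: conn_subset sub _; rewrite conn_sym.
exact: connected_conn (connected_comp xAv) (comp_self xAv) ax.
Qed.

Lemma disjoint_setD X Y : [disjoint X :\: Y & Y].
Proof. by rewrite -setI_eq0 setDE -setIA [~: Y :&: Y]setIC setICr setI0. Qed.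

Definition cpart U k P :=
  [/\ partition P U, #|P| = k & forall A, A \in P -> connected_set e A].

Definition cedge U k P Q := [/\ cpart U k P, cpart U k Q & recomb P Q].

Lemma cpart_partition U k P : cpart U k P -> partition P U.
Proof. by case. Qed.

Lemma cpart_card U k P : cpart U k P -> #|P| = k.
Proof. by case. Qed.

Lemma cpart_conn U k P A : cpart U k P -> A \in P -> connected_set e A.
Proof. by case=> _ _; apply. Qed.

Lemma block_eq P A B x : trivIset P -> A \in P -> B \in P -> x \in A -> x \in B ->
  A = B.
Proof. by move=> tP AP BP xA xB; rewrite -(def_pblock tP AP xA) (def_pblock tP BP xB). Qed.

Lemma pblockP U k P v : cpart U k P -> v \in U -> pblock P v \in P /\ v \in pblock P v.
Proof.
move=> pP vU; rewrite -(cover_partition (cpart_partition pP)) in vU.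
by rewrite pblock_mem // mem_pblock.
Qed.

Lemma cpart_add U k P B : cpart U k P -> connected_set e B -> [disjoint B & U] ->
  cpart (B :|: U) k.+1 (B |: P) /\ B \notin P.
Proof.
case=> pP cardP cP cB dBU; have B0 : B != set0 by case: cB.
have BP : B \notin P.
  apply/negP => BP; case/set0Pn: B0 => x xB.
  by have := disjointFr dBU xB; rewrite (subsetP (partitionS pP BP)).
split=> //; split; first exact: partitionU1.
  by rewrite cardsU1 BP cardP.
by move=> A /setU1P[->|]; last exact: cP.
Qed.

Lemma cpart_del U k P B : cpart U k P -> B \in P -> cpart (U :\: B) k.-1 (P :\ B).
Proof.
case=> pP cardP cP BP; split; first exact: partitionD1.
  by rewrite -cardP (cardsD1 B P) BP.
by move=> A /setD1P[_]; apply: cP.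
Qed.

Lemma swap_edge U k P A B C D : cpart U k P -> A \in P -> B \in P -> A != B ->
  C :|: D = A :|: B -> [disjoint C & D] -> connected_set e C -> connected_set e D ->
  C \notin P -> cedge U k P (C |: (D |: (P :\ A :\ B))).
Proof.
move=> pP AP BP AB CDAB dCD cC cD CP.
set R := P :\ A :\ B; set V := U :\: (A :|: B).
have BPA : B \in P :\ A by apply/setD1P; rewrite eq_sym.
have pR : cpart V k.-1.-1 R by rewrite /V -setDDl; apply: cpart_del (cpart_del pP AP) BPA.
have k2 : 1 < k.
  by rewrite -(cpart_card pP) (cardsD1 A P) AP add1n ltnS card_gt0; apply/set0Pn; exists B.
have ABU : A :|: B \subset U.
  by rewrite subUset !(partitionS (cpart_partition pP)).
have dV : forall X, X \subset A :|: B -> [disjoint X & V].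
  move=> X XAB; rewrite disjoint_sym; apply: disjointWr XAB _.
  exact: disjoint_setD.
have DAB : D \subset A :|: B by rewrite -CDAB subsetUr.
have [pDR DR] := cpart_add pR cD (dV D DAB).
have dC : [disjoint C & D :|: V].
  by rewrite -setI_eq0 setIUr setU_eq0 !setI_eq0 dCD dV // -CDAB subsetUl.
have [pQ CDR] := cpart_add pDR cC dC.
have CD : C != D.
  apply: contraNneq CP => CeD; case/set0Pn: (proj1 cC) => x xC.
  by have := disjointFr dCD xC; rewrite -CeD xC.
have kE : k.-1.-1.+2 = k by case: (k) k2 => [|[]].
have UE : C :|: (D :|: V) = U.
  apply/setP => t; rewrite setUA CDAB in_setU in_setD.
  by case: (boolP (t \in A :|: B)) => //= /(subsetP ABU) ->.
rewrite kE UE in pQ; split=> //.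
split; first by apply: contraNneq CP => ->; rewrite setU11.
exists A, B, C, D; split=> //.
- by rewrite AP BP AB.
- by rewrite !in_setU1 !eqxx orbT CD.
- by rewrite !setU1K.
Qed.

Fixpoint cwalk U k P (s : seq {set {set T}}) : Prop :=
  if s is Q :: s' then cedge U k P Q /\ cwalk U k Q s' else True.

Definition reach U k P Q n :=
  exists s, [/\ cwalk U k P s, last P s = Q & size s <= n].

Lemma reach_refl U k P : reach U k P P 0.
Proof. by exists [::]. Qed.

Lemma reach_le U k P Q n m : n <= m -> reach U k P Q n -> reach U k P Q m.
Proof. by move=> nm [s [w l sz]]; exists s; split => //; apply: leq_trans nm. Qed.

Lemma reach_edge U k P Q : cedge U k P Q -> reach U k P Q 1.
Proof. by move=> PQ; exists [:: Q]. Qed.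

Lemma reach_cat U k P Q R n m : reach U k P Q n -> reach U k Q R m ->
  reach U k P R (n + m).
Proof.
move=> [s1 [w1 l1 z1]] [s2 [w2 l2 z2]]; exists (s1 ++ s2).
rewrite last_cat l1 size_cat leq_add //; split=> //.
rewrite -l1 in w2; elim: s1 P w1 w2 {l1 z1} => //= Q1 s1 IH P [PQ1 w1] w2.
by split; last exact: IH.
Qed.

Lemma cedge_sym U k P Q : cedge U k P Q -> cedge U k Q P.
Proof.
case=> pP pQ [PQ [A [B [C [D [ABP CDQ ABCD RE]]]]]].
by split=> //; split; [rewrite eq_sym | exists C, D, A, B].
Qed.

Lemma reach_sym U k P Q n : reach U k P Q n -> reach U k Q P n.
Proof.
case=> s [w <- sz]; apply: reach_le sz _.
elim: s P w => [|R s IH] P /=; first by move=> _; apply: reach_refl.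
case=> PR w; rewrite -addn1; apply: reach_cat (IH R w) (reach_edge (cedge_sym PR)).
Qed.

Lemma cedge_add U k P Q B : connected_set e B -> [disjoint B & U] ->
  cedge U k P Q -> cedge (B :|: U) k.+1 (B |: P) (B |: Q).
Proof.
move=> cB dBU [pP pQ [PQ [A [C [A' [C' [/and3P[AP CP AC] /and3P[A'Q C'Q AC'] E RE]]]]]]].
have [pBP BP] := cpart_add pP cB dBU; have [pBQ BQ] := cpart_add pQ cB dBU.
split=> //; split.
  by apply: contra_neq PQ => BPQ; rewrite -(setU1K BP) BPQ setU1K.
have neqB X R : B \notin R -> X \in R -> B != X by move=> BR XR; apply: contraNneq BR => ->.
exists A, C, A', C'; split=> //.
- by rewrite !in_setU1 AP CP AC !orbT.
- by rewrite !in_setU1 A'Q C'Q AC' !orbT.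
apply/setP => X; move/setP: RE => /(_ X); rewrite !in_setD1 !in_setU1.
case: (eqVneq X B) => [->|_]; last by move=> ->.
by rewrite (neqB A P) // (neqB C P) // (neqB A' Q) // (neqB C' Q).
Qed.

(* Hence walks on U lift to walks on B :|: U; this carries the induction
   on U minus v back to U. *)
Lemma reach_add U k P Q B n : connected_set e B -> [disjoint B & U] ->
  reach U k P Q n -> reach (B :|: U) k.+1 (B |: P) (B |: Q) n.
Proof.
move=> cB dBU [s [w <- sz]]; exists [seq B |: R | R <- s].
rewrite (last_map (fun R => B |: R)) size_map; split=> //.
by elim: s P w {sz} => //= R s IH P [PR w]; split; [apply: cedge_add | apply: IH].
Qed.

Definition branches P v := comps (pblock P v :\ v).

Lemma branch_exit U k P v D : v \in U -> connected_set e (U :\ v) -> 1 < k ->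
  cpart U k P -> D \in branches P v ->
  exists a w, [/\ a \in D, w \in U :\: pblock P v & e a w].
Proof.
move=> vU cUv k2 pP DB; have [AP vA] := pblockP pP vU.
set A := pblock P v in AP vA DB *; have pPU := cpart_partition pP.
have [B /setD1P[BA BP]] : exists B, B \in P :\ A.
  apply/set0Pn; rewrite -card_gt0.
  by move: k2; rewrite -(cpart_card pP) (cardsD1 A P) AP.
have [b bB] := set0Pn _ (partition_neq0 pPU BP).
have bA : b \notin A.
  by apply: contra BA => bA; rewrite (block_eq (partition_trivIset pPU) BP AP bB bA).
have bUv : b \in U :\ v.
  by rewrite in_setD1 (subsetP (partitionS pPU BP)) // andbT; apply: contraNneq bA => ->.
have [z zAv defD] := imsetP DB; have zD : z \in D by rewrite defD comp_self.
have zUv : z \in U :\ v.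
  by move: zAv; rewrite !in_setD1 => /andP[-> /(subsetP (partitionS pPU AP))].
have bD : b \notin D.
  by apply: contra bA => /(subsetP (comps_sub DB)); rewrite in_setD1 => /andP[].
have [a [w [aD wD _ /setD1P[wv wU] eaw]]] := conn_exit zD bD (connected_conn cUv zUv bUv).
exists a, w; split=> //; rewrite inE wU andbT; apply: contra wD => wA.
by apply: comps_closed DB aD _ eaw; rewrite in_setD1 wv.
Qed.

(* One move detaches a branch D of v from the block A of v and glues it to
   the neighbouring block A' found by branch_exit; v keeps one branch less. *)
Lemma peel_step U k P v D : v \in U -> connected_set e (U :\ v) -> 1 < k ->
  cpart U k P -> D \in branches P v ->
  exists2 P', cedge U k P P' & #|branches P' v| < #|branches P v|.
Proof.
move=> vU cUv k2 pP DB; have [AP vA] := pblockP pP vU.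
have [a [w [aD /setDP[wU wA] eaw]]] := branch_exit vU cUv k2 pP DB.
rewrite /branches in DB *; set A := pblock P v in AP vA wA DB *.
have tP := partition_trivIset (cpart_partition pP).
have [A'P wA'] := pblockP pP wU; set A' := pblock P w in A'P wA'.
have AA' : A != A' by apply: contraNneq wA => ->.
have DA : D \subset A by apply: subset_trans (comps_sub DB) (subsetDl A _).
have [z zD] := set0Pn _ (proj1 (connected_comps DB)).
have vD : v \notin D by apply/negP => /(subsetP (comps_sub DB)); rewrite setD11.
have vC : v \in A :\: D by rewrite inE vD.
have CDAB : (A :\: D) :|: (D :|: A') = A :|: A'.
  apply/setP => t; rewrite !in_setU in_setD.
  by case: (boolP (t \in D)) => //= /(subsetP DA) ->.
have dC : [disjoint A :\: D & D :|: A'].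
  rewrite -setI_eq0 setIUr setU_eq0; apply/andP; split.
    by rewrite setI_eq0 disjoint_setD.
  rewrite setI_eq0; apply: disjointWl (subsetDl A D) _.
  by apply/(trivIsetP tP).
have cC := connected_setD_comp (cpart_conn pP AP) vA DB.
have cD' := connected_setU (connected_comps DB) (cpart_conn pP A'P) aD wA' eaw.
have CP : A :\: D \notin P.
  apply/negP => CP; have := block_eq tP CP AP vC vA => /setP/(_ z).
  by rewrite inE zD (subsetP DA).
have edge := swap_edge pP AP A'P AA' CDAB dC cC cD' CP.
exists (A :\: D |: (D :|: A' |: (P :\ A :\ A'))) => //.
case: edge => _ pP' _; have tP' := partition_trivIset (cpart_partition pP').
rewrite (def_pblock tP' (setU11 _ _) vC).
have -> : (A :\: D) :\ v = (A :\ v) :\: D by rewrite !setDDl setUC.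
by rewrite comps_setD // [X in _ < X](cardsD1 D) DB.
Qed.

Lemma isolate U k P v : v \in U -> connected_set e (U :\ v) -> 1 < k ->
  cpart U k P ->
  exists P', [/\ cpart U k P', [set v] \in P' & reach U k P P' #|branches P v|].
Proof.
move=> vU cUv k2; have [n] := ubnP #|branches P v|.
elim: n P => // n IH P /ltnSE bn pP.
have [AP vA] := pblockP pP vU.
case: (set_0Vmem (pblock P v :\ v)) => [A0|[z zAv]].
  exists P; split=> //; last exact: reach_le (leq0n _) (reach_refl _ _ _).
  by rewrite -(setD1K vA) A0 setU0 in AP.
have [P' PP' lt] := peel_step vU cUv k2 pP (mem_comps zAv).
have [_ pP' _] := PP'.
have [P1 [pP1 vP1 r1]] := IH P' (leq_trans lt bn) pP'.
by exists P1; split=> //; apply: reach_le lt (reach_cat (reach_edge PP') r1).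
Qed.

Lemma far_branches_cross A r v1 v2 D1 D2 : connected_set e A -> r \in A -> v1 != v2 ->
  D1 \in comps (A :\ v1) -> D2 \in comps (A :\ v2) -> r \notin D1 -> r \notin D2 ->
  v2 \in D1 -> v1 \notin D2.
Proof.
move=> cA rA v12 D1S D2S rD1 rD2 v2D1; apply/negP => v1D2.
have rAv2 : r \in A :\ v2 by rewrite in_setD1 rA andbT; apply: contraNneq rD1 => ->.
set X := comp (A :\ v2) r.
have v1X : v1 \notin X.
  by apply: contra rD2 => v1X; rewrite -(comps_eq (mem_comps rAv2) D2S v1X v1D2) comp_self.
have XAv1 : X \subset A :\ v1.
  apply/subsetP => t tX; have /setD1P[_ tA] := subsetP (comp_sub _ _) t tX.
  by rewrite in_setD1 tA andbT; apply: contraNneq v1X => <-.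
have XR := comp_max XAv1 (comp_self rAv2) (connected_comp rAv2).
have v2Av1 : v2 \in A :\ v1 := subsetP (comps_sub D1S) v2 v2D1.
have [a aX eav2] := comp_neighbor cA (setD1P v2Av1).2 rAv2.
have v2R : v2 \in comp (A :\ v1) r by apply: comp_closed (subsetP XR a aX) v2Av1 eav2.
have rAv1 : r \in A :\ v1 := subsetP XAv1 r (comp_self rAv2).
by move: rD1; rewrite -(comps_eq (mem_comps rAv1) D1S v2R v2D1) comp_self.
Qed.

(* Let W be a component of U minus x.  Root every block
   at x when it contains x.  Every branch of a vertex v \in W not containing
   the root of its block contains a neighbour of v lying in W, and by
   far_branches_cross distinct such pairs yield distinct neighbours; so the
   vertices of W have at most 2 #|W| branches in total. *)
Section BranchCount.
Variables (U W : {set T}) (x : T) (k : nat) (P : {set {set T}}).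
Hypothesis pP : cpart U k P.
Hypothesis WU : W \subset U.
Hypothesis W_closed : forall a b, a \in W -> b \in U -> b != x -> e a b -> b \in W.

Definition root A := if x \in A then x else odflt x [pick y in A].

Lemma root_in A : A != set0 -> root A \in A.
Proof.
rewrite /root; case: ifP => // _ /set0Pn[y yA].
by case: pickP => [y' //|/(_ y)]; rewrite yA.
Qed.

Definition far_branches v := [set D in branches P v | root (pblock P v) \notin D].

(* At most one branch of v contains the root. *)
Lemma branches_far v : #|branches P v| <= #|far_branches v| + 1.
Proof.
set r := root (pblock P v); set N := [set D in branches P v | r \in D].
have sub : branches P v \subset far_branches v :|: N.
  by apply/subsetP => D DB; rewrite !inE DB; case: (r \in D).
apply: leq_trans (subset_leq_card sub) (leq_trans (leq_card_setU _ _) _).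
rewrite leq_add2l; case: (set_0Vmem N) => [->|[D0 D0N]]; first by rewrite cards0.
rewrite -(cards1 D0); apply/subset_leq_card/subsetP => D DN; apply/set1P.
move: DN D0N; rewrite !inE => /andP[DB rD] /andP[D0B rD0].
exact: comps_eq DB D0B rD rD0.
Qed.

(* For a far branch D of v, a neighbour of v in D; it lies in W and
   determines the pair (v, D). *)
Definition pick_nbr (p : T * {set T}) := odflt x [pick u in p.2 | e p.1 u].

Definition far_pairs := [set p : T * {set T} | (p.1 \in W) && (p.2 \in far_branches p.1)].

Lemma pick_nbr_spec p : p \in far_pairs ->
  [/\ pick_nbr p \in p.2, e p.1 (pick_nbr p) & pick_nbr p \in W].
Proof.
case: p => v D; rewrite !inE /= => /andP[vW /andP[DB rD]].
have [AP vA] := pblockP pP (subsetP WU v vW).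
set A := pblock P v in AP vA DB rD.
have [y yAv defD] := imsetP DB.
have [u uD euv] := comp_neighbor (cpart_conn pP AP) vA yAv; rewrite -defD in uD.
have [gD eg] : pick_nbr (v, D) \in D /\ e v (pick_nbr (v, D)).
  rewrite /pick_nbr /=; case: pickP => [u' /andP[] //|/(_ u)].
  by rewrite uD sym_e euv.
split=> //; have /setD1P[_ gA] := subsetP (comps_sub DB) _ gD.
apply: W_closed vW (subsetP (partitionS (cpart_partition pP) AP) _ gA) _ eg.
by apply: contraNneq rD => gx; rewrite /root -gx gA.
Qed.

Lemma pick_nbr_inj : {in far_pairs &, injective pick_nbr}.
Proof.
move=> [v1 D1] [v2 D2] p1 p2 /= eg.
have [] := pick_nbr_spec p1; have [] := pick_nbr_spec p2.
rewrite /= -eg; set u := pick_nbr (v1, D1) => uD2 e2 _ uD1 e1 _.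
move: p1 p2; rewrite !inE /= => /andP[v1W /andP[D1B rD1]] /andP[v2W /andP[D2B rD2]].
have [A1P v1A1] := pblockP pP (subsetP WU v1 v1W).
have [A2P v2A2] := pblockP pP (subsetP WU v2 v2W).
have /setD1P[_ uA1] := subsetP (comps_sub D1B) u uD1.
have /setD1P[_ uA2] := subsetP (comps_sub D2B) u uD2.
have eA := block_eq (partition_trivIset (cpart_partition pP)) A1P A2P uA1 uA2.
rewrite /branches in D1B D2B; rewrite eA in D1B rD1 v1A1.
set A := pblock P v2 in A2P v1A1 v2A2 D1B D2B rD1 rD2.
case: (eqVneq v1 v2) => [e12|v12].
  by rewrite e12 in D1B *; rewrite (comps_eq D1B D2B uD1 uD2).
have v2D1 : v2 \in D1.
  by apply: (comps_closed D1B uD1); [rewrite in_setD1 eq_sym v12 | rewrite sym_e].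
have v1D2 : v1 \in D2.
  by apply: (comps_closed D2B uD2); [rewrite in_setD1 v12 | rewrite sym_e].
have rA : root A \in A by apply: root_in; apply/set0Pn; exists v2.
by have := far_branches_cross (cpart_conn pP A2P) rA v12 D1B D2B rD1 rD2 v2D1; rewrite v1D2.
Qed.

(* Summing branches_far over W and bounding the far pairs by #|W|. *)
Lemma sum_branches : \sum_(v in W) #|branches P v| <= 2 * #|W|.
Proof.
have far_pairsE : \sum_(v in W) #|far_branches v| = #|far_pairs|.
  rewrite (eq_bigr (fun v => \sum_(D in far_branches v) 1)) => [|v _]; last first.
    by rewrite sum1_card.
  by rewrite pair_big_dep -sum1_card; apply: eq_bigl => p; rewrite [in RHS]inE.
have far_pairs_le : #|far_pairs| <= #|W|.
  rewrite -(card_in_imset pick_nbr_inj); apply/subset_leq_card/subsetP => u.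
  by case/imsetP=> p pF ->; have [] := pick_nbr_spec pF.
apply: (@leq_trans (\sum_(v in W) (#|far_branches v| + 1))).
  by apply: leq_sum => v _; apply: branches_far.
by rewrite big_split /= far_pairsE sum1_card mul2n -addnn leq_add2r.
Qed.

End BranchCount.

Lemma comp_nested U x z v y : connected_set e U -> v \in comp (U :\ x) z ->
  y \in U :\ v -> x \notin comp (U :\ v) y -> comp (U :\ v) y \proper comp (U :\ x) z.
Proof.
move=> cU vW yUv xW'; set W := comp (U :\ x) z; set W' := comp (U :\ v) y.
have vW' : v \notin W' by apply/negP => /(subsetP (comp_sub _ _)); rewrite setD11.
have /setD1P[_ vU] := subsetP (comp_sub _ _) v vW; have /setD1P[_ yU] := yUv.
have [a [b [aW' bW' aU bU eab]]] := conn_exit (comp_self yUv) vW' (connected_conn cU yU vU).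
have bv : b = v.
  apply/eqP; apply: contraNT bW' => bv.
  by apply: comp_closed aW' _ eab; rewrite in_setD1 bv.
have aUx : a \in U :\ x by rewrite in_setD1 aU andbT; apply: contraNneq xW' => <-.
have aW : a \in W by apply: comp_closed vW aUx _; rewrite sym_e -bv.
have W'Ux : W' \subset U :\ x.
  apply/subsetP => t tW'; have /setD1P[_ tU] := subsetP (comp_sub _ _) t tW'.
  by rewrite in_setD1 tU andbT; apply: contraNneq xW' => <-.
have W'W : W' \subset W.
  by rewrite /W -(comp_eq aW); apply: comp_max W'Ux aW' (connected_comp yUv).
by rewrite properE W'W /=; apply/subsetPn; exists v.
Qed.

Lemma min_comp_noncut U x z : connected_set e U -> x \in U ->
  (forall v y, v \in U -> y \in U :\ v -> #|comp (U :\ x) z| <= #|comp (U :\ v) y|) ->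
  forall v, v \in comp (U :\ x) z -> connected_set e (U :\ v).
Proof.
move=> cU xU Wmin v vW; have /setD1P[vx vU] := subsetP (comp_sub _ _) v vW.
have xUv : x \in U :\ v by rewrite in_setD1 xU andbT eq_sym.
apply: (connected_from xUv) => y yUv; apply: contraT => nxy.
have xW' : x \notin comp (U :\ v) y by rewrite inE conn_sym (negbTE nxy) andbF.
by have := proper_card (comp_nested cU vW yUv xW'); rewrite ltnNge Wmin.
Qed.

Lemma exists_le_average W (f : T -> nat) c : W != set0 ->
  \sum_(v in W) f v <= c * #|W| -> exists2 v, v \in W & f v <= c.
Proof.
move=> W0 sum_le; case: (pickP [pred v in W | f v <= c]) => [v /andP[]|small].
  by exists v.
have : \sum_(v in W) c.+1 <= \sum_(v in W) f v.
  by apply: leq_sum => v vW; move: (small v); rewrite /= vW /= ltnNge => ->.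
rewrite sum_nat_const => /leq_trans/(_ sum_le).
by rewrite mulnC leq_pmul2r ?ltnn // card_gt0.
Qed.

Lemma good_vertex U kP kQ P Q : connected_set e U -> 1 < #|U| ->
  cpart U kP P -> cpart U kQ Q ->
  exists v, [/\ v \in U, connected_set e (U :\ v) &
                #|branches P v| + #|branches Q v| <= 4].
Proof.
move=> cU U2 pP pQ.
have [x0 x0U] : exists x0, x0 \in U by apply/card_gt0P; apply: ltnW.
have [z0 z0U] : exists z0, z0 \in U :\ x0.
  by apply/card_gt0P; move: U2; rewrite (cardsD1 x0 U) x0U.
pose admissible (p : T * T) := (p.1 \in U) && (p.2 \in U :\ p.1).
have adm0 : admissible (x0, z0) by rewrite /admissible x0U z0U.
case: (arg_minnP (fun p : T * T => #|comp (U :\ p.1) p.2|) adm0) => [[x z]].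
rewrite /admissible /= => /andP[xU zUx] Wmin.
set W := comp (U :\ x) z.
have WU : W \subset U by apply: subset_trans (comp_sub _ _) (subsetDl U _).
have W_closed a b : a \in W -> b \in U -> b != x -> e a b -> b \in W.
  by move=> aW bU bx; apply: comp_closed aW _; rewrite in_setD1 bx.
have noncut : forall v, v \in W -> connected_set e (U :\ v).
  by apply: min_comp_noncut cU xU _ => v y vU yUv; apply: (Wmin (v, y)); rewrite /= vU.
have W0 : W != set0 by apply/set0Pn; exists z; apply: comp_self.
have [v vW le4] : exists2 v, v \in W & #|branches P v| + #|branches Q v| <= 4.
  apply: exists_le_average W0 _; rewrite big_split /= (mulnDl 2 2).
  exact: leq_add (sum_branches pP WU W_closed) (sum_branches pQ WU W_closed).
by exists v; split; [apply: (subsetP WU) | apply: noncut |].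
Qed.

Lemma cpart_size U k P : cpart U k P -> k <= #|U|.
Proof.
move=> pP; rewrite (card_partition (cpart_partition pP)) -(cpart_card pP) -sum1_card.
by apply: leq_sum => A AP; rewrite card_gt0 (partition_neq0 (cpart_partition pP)).
Qed.

Lemma cpart1 U P : cpart U 1 P -> P = [set U].
Proof.
move=> pP; have /cards1P[A PA] := introT eqP (cpart_card pP).
by move: (cover_partition (cpart_partition pP)); rewrite PA cover1 => ->.
Qed.

(* Induction on k: isolate a good vertex v in both partitions (at most four
   moves), then connect the remaining (k-1)-partitions of U minus v. *)
Lemma reach_bound k U P Q : connected_set e U -> cpart U k.+1 P -> cpart U k.+1 Q ->
  reach U k.+1 P Q (4 * k).
Proof.
elim: k U P Q => [|k IH] U P Q cU pP pQ.
  by rewrite (cpart1 pP) (cpart1 pQ); apply: reach_refl.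
have [v [vU cUv le4]] := good_vertex cU (leq_trans (isT : 1 < k.+2) (cpart_size pP)) pP pQ.
have [P1 [pP1 vP1 rP]] := isolate vU cUv (isT : 1 < k.+2) pP.
have [Q1 [pQ1 vQ1 rQ]] := isolate vU cUv (isT : 1 < k.+2) pQ.
have rPQ1 := IH _ _ _ cUv (cpart_del pP1 vP1) (cpart_del pQ1 vQ1).
have := reach_add (connected_set1 v) (_ : [disjoint [set v] & U :\ v]) rPQ1.
rewrite !setD1K // disjoints1 setD11 => /(_ isT) rPQ.
apply: reach_le (reach_cat (reach_cat rP rPQ) (reach_sym rQ)).
by rewrite mulnS addnAC leq_add2r.
Qed.

Lemma cwalk_Rinf k P s : cwalk [set: T] k P s -> Rinf_walk e k P s.
Proof. by elim: s P => //= Q s IH P [PQ w]; split; last exact: IH. Qed.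

Lemma Rinf_walk_conn k P s : Rinf_walk e k P s -> Rinf_conn e k P (last P s).
Proof.
elim: s P => [|Q s IH] P /=; first by move=> _; apply: Rinf_refl.
by case=> PQ w; apply: Rinf_step PQ (IH Q w).
Qed.

End Recombination.

Unset Implicit Arguments.

Theorem mainTheorem3 (T : finType) (e : rel T) (k : nat) :
  symmetric e -> irreflexive e -> connected_graph e -> 1 <= k ->
  forall P1 P2 : {set {set T}},
    conn_partition e k P1 -> conn_partition e k P2 ->
    (exists s : seq {set {set T}},
        [/\ Rinf_walk e k P1 s, last P1 s = P2 & size s <= 6 * (k - 1)])
    /\ Rinf_conn e k P1 P2.
Proof.
move=> sym_e _ cG; case: k => // k _ P1 P2 p1 p2.
have [s [w <- sz]] := reach_bound sym_e cG p1 p2.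
split; last exact/Rinf_walk_conn/cwalk_Rinf.
exists s; split=> //; first exact: cwalk_Rinf.
by apply: leq_trans sz _; rewrite subn1 leq_mul2r orbT.
Qed.
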